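(* Let $P$ be a finite poset and $R$ a commutative unital ring. Then there is an isomorphism of $R$-algebras $$Z^3_2(P,R)/Z^3_3(P,R)\cong\bigoplus_{x,y\in P,\ l(x,y)=1}R(e_{xxy}+e_{xyy}),$$ where the right-hand side is the direct sum of algebras (coordinatewise multiplication) and each $R(e_{xxy}+e_{xyy})$ is the subalgebra of $I^3(P,R)$ spanned by the idempotent $e_{xxy}+e_{xyy}$.
   Context: For a finite poset $P$, $P^3_\le=\{(x,y,z)\in P^3: x\le y\le z\}$, and $I^3(P,R)$ is the $R$-module of functions $f:P^3_\le\to R$ with multiplication $(fg)(x_1,x_2,x_3)=\sum f(x_1,y_1,y_2)g(y_1,y_2,x_3)$ over all $x_1\le y_1\le x_2\le y_2\le x_3$. For $x\le y\le z$, $e_{xyz}$ is the function equal to $1$ at $(x,y,z)$ and $0$ elsewhere. For $a\le b$, $l(a,b)$ is the maximum of $|C|-1$ over chains $C$ in the interval $[a,b]$. $J^3_1(P,R)=\{f: f(x,x,x)=0\ \forall x\}$. $[f,g]=fg-gf$; $[U,V]$ is the $R$-submodule spanned by all $[u,v]$, $u\in U,v\in V$. $Z^3_1(P,R)=J^3_1(P,R)$, $Z^3_2(P,R)=[Z^3_1(P,R),Z^3_1(P,R)]$, $Z^3_3(P,R)=[Z^3_2(P,R),Z^3_2(P,R)]$; $Z^3_3(P,R)$ is an ideal of the algebra $Z^3_2(P,R)$, and the quotient carries the induced multiplication. *)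

From HB Require Import structures.
From mathcomp Require Import all_boot all_order all_algebra.
Set Implicit Arguments.
Unset Strict Implicit.
Unset Printing Implicit Defensive.
Import Order.TTheory GRing.Theory.
Local Open Scope order_scope.

Section IncidenceCube.
Variables (d : Order.disp_t) (P : finPOrderType d) (R : comPzRingType).

Definition chain3 (t : P * P * P) : bool := (t.1.1 <= t.1.2) && (t.1.2 <= t.2).
Definition T3 := {t : P * P * P | chain3 t}.

Definition I3 := {ffun T3 -> R}.

(* value of f at (x,y,z), 0 if (x,y,z) is not in P^3_<= *)
Definition ev (f : I3) (x y z : P) : R :=
  if insub (x, y, z) is Some t then f t else 0%R.

Definition i3add (f g : I3) : I3 := [ffun t => (f t + g t)%R].
Definition i3opp (f : I3) : I3 := [ffun t => (- f t)%R].
Definition i3scale (c : R) (f : I3) : I3 := [ffun t => (c * f t)%R].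
Definition i3zero : I3 := [ffun t => 0%R].

Definition i3mul (f g : I3) : I3 :=
  [ffun t : T3 => let: (x1, x2, x3) := val t in
     (\sum_(y1 : P) \sum_(y2 : P |
        [&& (x1 <= y1)%O, (y1 <= x2)%O, (x2 <= y2)%O & (y2 <= x3)%O])
        ev f x1 y1 y2 * ev g y1 y2 x3)%R].

Definition i3comm (f g : I3) : I3 := i3add (i3mul f g) (i3opp (i3mul g f)).

Definition e3 (x y z : P) : I3 := [ffun t : T3 => ((val t == (x, y, z)) : nat)%:R%R].

Definition span3 (S : I3 -> Prop) (f : I3) : Prop :=
  exists (n : nat) (c : 'I_n -> R) (s : 'I_n -> I3),
    (forall i, S (s i)) /\
    f = \big[i3add/i3zero]_(i < n) i3scale (c i) (s i).

Definition commsp (U V : I3 -> Prop) : I3 -> Prop :=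
  span3 (fun h => exists u v, U u /\ V v /\ h = i3comm u v).

Definition J31 (f : I3) : Prop := forall x : P, ev f x x x = 0%R.
Definition Z31 : I3 -> Prop := J31.
Definition Z32 : I3 -> Prop := commsp Z31 Z31.
Definition Z33 : I3 -> Prop := commsp Z32 Z32.

Definition is_chain (C : {set P}) : bool :=
  [forall x in C, forall y in C, (x <= y) || (y <= x)].
Definition lgth (a b : P) : nat :=
  (\max_(C : {set P} | (C \subset [set z | (a <= z)%O && (z <= b)%O]) && is_chain C)
     #|C|.-1)%N.

Definition cov1 (p : P * P) : bool := lgth p.1 p.2 == 1%N.
Definition Cov := {p : P * P | cov1 p}.

Definition gen (k : Cov) : I3 :=
  let: (x, y) := val k in i3add (e3 x x y) (e3 x y y).

Definition inRgen (k : Cov) (h : I3) : Prop := exists c : R, h = i3scale c (gen k).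

(* An R-algebra isomorphism  Z2/Z3 ~= (+)_k R(gen k), presented as a map
   phi : Z2 -> (+)_k R(gen k) (componentwise) which is R-linear,
   multiplicative (coordinatewise product in the direct sum), onto,
   and has kernel exactly Z3. *)
Definition quot_iso (phi : I3 -> {ffun Cov -> I3}) : Prop :=
  [/\ (forall f, Z32 f -> forall k, inRgen k (phi f k)),
      (forall c f g, Z32 f -> Z32 g ->
         phi (i3add (i3scale c f) g) =
         [ffun k => i3add (i3scale c (phi f k)) (phi g k)]),
      (forall f g, Z32 f -> Z32 g ->
         phi (i3mul f g) = [ffun k => i3mul (phi f k) (phi g k)]),
      (forall h : {ffun Cov -> I3}, (forall k, inRgen k (h k)) ->
         exists2 f, Z32 f & phi f = h)
    & (forall f, Z32 f -> (phi f = [ffun k => i3zero] <-> Z33 f))].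

End IncidenceCube.

From Pilot Require Import Defs.
From mathcomp Require Import all_boot all_order all_algebra.
Set Implicit Arguments.
Unset Strict Implicit.
Unset Printing Implicit Defensive.
Import Order.TTheory GRing.Theory.
Local Open Scope ring_scope.
Local Open Scope order_scope.

(* Write [seg a b c e] for the sum of the [e_{axe}] over [b <= x <= c].  Segments
   multiply by a single rule ([mul_seg]), which turns every commutator below into a
   comparison of points.  A commutator of two functions vanishing on the diagonal is
   balanced: it vanishes on the diagonal and takes the same value at (x,x,y) and at
   (x,y,y) whenever y covers x.  On balanced functions f |-> (f(x,x,y))_{x <. y} is
   multiplicative, and on Z^3_2 it is onto the span of the idempotents
   e_xxy + e_xyy = [e_xxy, e_xyy] = seg x x y y.  Commutators of balanced functions
   vanish at every such (x,x,y), so Z^3_3 lies in the kernel.  Conversely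
   [seg a a b b, seg b b c c] = e_abc for a < b < c, and for a < m < c the commutators
   [seg a a m m, seg a a c c] = seg a a m c and [seg a a c c, seg m m c c] = seg a m c c
   give e_aac and e_acc modulo such e_abc.  A balanced function whose (x,x,y)
   coordinates vanish is supported on triples a <= b <= c with a point strictly
   between a and c, hence lies in Z^3_3. *)

Section IncidenceCube.
Variables (disp : Order.disp_t) (P : finPOrderType disp) (R : comPzRingType).
Local Notation I3 := (I3 P R).
Local Notation ev := (@ev disp P R).
Local Notation e3 := (@e3 disp P R).
Local Notation Cov := (Cov P).
Local Notation gen := (@gen disp P R).
Implicit Types (f g u v : I3) (a b e x y z m : P).

Definition ind (b : bool) : R := b%:R.

Lemma indM (b1 b2 : bool) : ind b1 * ind b2 = ind (b1 && b2).
Proof. by rewrite /ind -natrM mulnb. Qed.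

Lemma ind_if (b1 b2 : bool) : (if b1 then ind b2 else 0) = ind (b1 && b2).
Proof. by case: b1. Qed.

Lemma ind0 : ind false = 0. Proof. by []. Qed.
Lemma ind1 : ind true = 1. Proof. by []. Qed.

Lemma i3addE f g : i3add f g = f + g.
Proof. by apply/ffunP => t; rewrite !ffunE. Qed.

Lemma i3zeroE : i3zero P R = 0.
Proof. by apply/ffunP => t; rewrite !ffunE. Qed.

Lemma i3commE f g : i3comm f g = i3mul f g - i3mul g f.
Proof. by apply/ffunP => t; rewrite !ffunE. Qed.

Lemma big_i3addE n (F : 'I_n -> I3) :
  \big[@i3add disp P R/i3zero P R]_(i < n) F i = \sum_(i < n) F i.
Proof. by apply: (big_morph id) => [f g|]; rewrite ?i3addE ?i3zeroE. Qed.

Lemma i3scale0 f : i3scale 0 f = 0.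
Proof. by apply/ffunP => t; rewrite !ffunE mul0r. Qed.

Lemma i3scale1 f : i3scale 1 f = f.
Proof. by apply/ffunP => t; rewrite !ffunE mul1r. Qed.

Lemma i3scaleN1 f : i3scale (-1) f = - f.
Proof. by apply/ffunP => t; rewrite !ffunE mulN1r. Qed.

Lemma i3scaler0 (c : R) : i3scale c (0 : I3) = 0.
Proof. by apply/ffunP => t; rewrite !ffunE mulr0. Qed.

Lemma i3scaleDr c f g : i3scale c (f + g) = i3scale c f + i3scale c g.
Proof. by apply/ffunP => t; rewrite !ffunE mulrDr. Qed.

Lemma i3scaleA (c1 c2 : R) f : i3scale c1 (i3scale c2 f) = i3scale (c1 * c2) f.
Proof. by apply/ffunP => t; rewrite !ffunE mulrA. Qed.

Lemma chain3E x y z : chain3 (x, y, z) = (x <= y <= z).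
Proof. by []. Qed.

Lemma ev_chain f x y z (h : chain3 (x, y, z)) : ev f x y z = f (exist _ (x, y, z) h).
Proof. by rewrite /Defs.ev insubT. Qed.

Lemma ev_ext f g :
  (forall x y z, chain3 (x, y, z) -> ev f x y z = ev g x y z) -> f = g.
Proof.
move=> efg; apply/ffunP => -[[[x y] z] h].
by have := efg x y z h; rewrite !(ev_chain _ h).
Qed.

Lemma ev0 x y z : ev 0 x y z = 0.
Proof. by rewrite /Defs.ev; case: insub => [t|]; rewrite ?ffunE. Qed.

Lemma ev_add f g x y z : ev (f + g) x y z = ev f x y z + ev g x y z.
Proof. by rewrite /Defs.ev; case: insub => [t|]; rewrite ?ffunE ?addr0. Qed.

Lemma ev_opp f x y z : ev (- f) x y z = - ev f x y z.
Proof. by rewrite /Defs.ev; case: insub => [t|]; rewrite ?ffunE ?oppr0. Qed.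

Lemma ev_sum (I : Type) (r : seq I) (Q : pred I) (F : I -> I3) x y z :
  ev (\sum_(i <- r | Q i) F i) x y z = \sum_(i <- r | Q i) ev (F i) x y z.
Proof.
by apply: (big_morph (fun f => ev f x y z)) => [f g|]; rewrite ?ev_add ?ev0.
Qed.

Lemma ev_scale c f x y z : ev (i3scale c f) x y z = c * ev f x y z.
Proof. by rewrite /Defs.ev; case: insub => [t|]; rewrite ?ffunE ?mulr0. Qed.

Lemma ev_comm f g x y z :
  ev (i3comm f g) x y z = ev (i3mul f g) x y z - ev (i3mul g f) x y z.
Proof. by rewrite i3commE ev_add ev_opp. Qed.

Lemma ev_mul f g x1 x2 x3 : chain3 (x1, x2, x3) ->
  ev (i3mul f g) x1 x2 x3 =
  \sum_(y1 : P | x1 <= y1 <= x2) \sum_(y2 : P | (x2 <= y2 <= x3)%O)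
    ev f x1 y1 y2 * ev g y1 y2 x3.
Proof.
move=> h; rewrite ev_chain ffunE /= [RHS]big_mkcond; apply: eq_bigr => y1 _.
by case: (x1 <= y1); case: (y1 <= x2); rewrite /= ?big_pred0_eq.
Qed.

Lemma i3mul_scale c1 c2 f g :
  i3mul (i3scale c1 f) (i3scale c2 g) = i3scale (c1 * c2) (i3mul f g).
Proof.
apply: ev_ext => x1 x2 x3 h; rewrite ev_scale !ev_mul // mulr_sumr.
apply: eq_bigr => y1 _; rewrite mulr_sumr; apply: eq_bigr => y2 _.
by rewrite !ev_scale mulrACA.
Qed.

Lemma lgth_chain a b (C : {set P}) :
  C \subset [set z | a <= z <= b] -> is_chain C -> (#|C|.-1 <= lgth a b)%N.
Proof.
by move=> sC chC; apply: (leq_bigmax_cond (F := fun C : {set P} => #|C|.-1)); rewrite sC.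
Qed.

Lemma lgth_bounded a b n :
  (forall C : {set P}, C \subset [set z | a <= z <= b] -> (#|C| <= n.+1)%N) ->
  (lgth a b <= n)%N.
Proof. by move=> bC; apply/bigmax_leqP => C /andP[/bC]; case: #|C|. Qed.

Lemma is_chain3 x m y : x <= m <= y -> is_chain [set x; m; y].
Proof.
move=> /andP[xm my]; have xy := le_trans xm my.
apply/forall_inP => u; rewrite !inE => /orP[/orP[]|] /eqP->;
apply/forall_inP => v; rewrite !inE => /orP[/orP[]|] /eqP->;
by rewrite ?lexx ?xm ?my ?xy ?orbT.
Qed.

Lemma interval3_sub x m y : x <= m <= y -> [set x; m; y] \subset [set z | x <= z <= y].
Proof.
move=> /andP[xm my]; apply/subsetP => u; rewrite !inE.
by case/orP => [/orP[]|] /eqP->; rewrite ?lexx ?xm ?my ?(le_trans xm my).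
Qed.

Lemma cov1_lt x y : cov1 (x, y) -> x < y.
Proof.
move=> /eqP lxy; apply/contraT => nxy; suff : (lgth x y <= 0)%N by rewrite lxy.
apply: lgth_bounded => C /subsetP sC; rewrite -(cards1 x); apply/subset_leq_card/subsetP.
move=> z /sC; rewrite !inE => /andP[xz zy].
have yx : y = x by apply/eqP; move: nxy; rewrite lt_def (le_trans xz zy) andbT negbK.
by subst y; rewrite eq_le xz zy.
Qed.

Lemma cov1_mid x y m : cov1 (x, y) -> x <= m <= y -> (m == x) || (m == y).
Proof.
move=> /eqP lxy xmy; apply/negPn/negP; rewrite negb_or => /andP[mx my].
have xy : x != y by apply: contraNneq mx => exy; move: xmy; rewrite -exy eq_le andbC.
have := lgth_chain (interval3_sub xmy) (is_chain3 xmy).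
rewrite lxy setUC cardsU1 cards2 !inE negb_or (eq_sym y x) (eq_sym y m) (eq_sym x m).
by rewrite mx xy my.
Qed.

Lemma cov1_intro x y :
  x < y -> (forall m, x <= m <= y -> (m == x) || (m == y)) -> cov1 (x, y).
Proof.
move=> xy mid; rewrite /cov1 /= eqn_leq; apply/andP; split.
  apply: lgth_bounded => C /subsetP sC; rewrite -[2%N]/(1 + 1)%N.
  apply: leq_trans (subset_leq_card (_ : C \subset [set x; y])) _.
    by apply/subsetP => z /sC; rewrite !inE => /mid.
  by rewrite cards2 ltnS leq_b1.
have xxy : x <= x <= y by rewrite lexx ltW.
apply: leq_trans (lgth_chain (interval3_sub xxy) (is_chain3 xxy)).
by rewrite setUC cardsU1 cards2 !inE eqxx (gt_eqF xy).
Qed.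

Lemma sum_point (V : nmodType) (F : P -> V) x : \sum_(z | x <= z <= x) F z = F x.
Proof. by apply: big_pred1 => z; rewrite /= -eq_le eq_sym. Qed.

Lemma sum_cover (V : nmodType) (F : P -> V) x y :
  cov1 (x, y) -> \sum_(z | x <= z <= y) F z = F x + F y.
Proof.
move=> cxy; have xy := cov1_lt cxy.
rewrite (bigD1 x) ?lexx ?ltW //= (bigD1 y) ?lexx ?ltW ?gt_eqF //=.
rewrite big1 ?addr0 // => z /andP[/andP[xzy zx] zy].
by move: (cov1_mid cxy xzy); rewrite (negbTE zx) (negbTE zy).
Qed.

Lemma ev_mul_xxx f g x : ev (i3mul f g) x x x = ev f x x x * ev g x x x.
Proof. by rewrite ev_mul ?chain3E ?lexx // !sum_point. Qed.

Lemma ev_mul_xxy f g x y : cov1 (x, y) ->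
  ev (i3mul f g) x x y = ev f x x x * ev g x x y + ev f x x y * ev g x y y.
Proof.
by move=> cxy; rewrite ev_mul ?chain3E ?lexx ?ltW ?cov1_lt // sum_point sum_cover.
Qed.

Lemma ev_mul_xyy f g x y : cov1 (x, y) ->
  ev (i3mul f g) x y y = ev f x x y * ev g x y y + ev f x y y * ev g y y y.
Proof.
by move=> cxy; rewrite ev_mul ?chain3E ?lexx ?ltW ?cov1_lt // sum_cover // !sum_point.
Qed.

Definition seg a b c e : I3 :=
  [ffun t => ind [&& (val t).1.1 == a, b <= (val t).1.2 <= c & (val t).2 == e]].

Lemma ev_seg a b c e x y z :
  ev (seg a b c e) x y z = ind [&& chain3 (x, y, z), x == a, b <= y <= c & z == e].
Proof.
rewrite /Defs.ev; case: insubP => [t h tE | /negbTE->] //.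
by rewrite ffunE tE h.
Qed.

Lemma seg_sum a b c e : seg a b c e = \sum_(x | b <= x <= c) e3 a x e.
Proof.
apply/ffunP => -[[[x y] z] h]; rewrite ffunE sum_ffunE /=.
rewrite big_mkcond (big_only1 y) //= => [|w wy _]; rewrite ffunE /= !xpair_eqE.
  by rewrite eqxx andbT; case: (b <= y <= c); rewrite ?andbF.
by rewrite eq_sym in wy; rewrite (negbTE wy) andbF; case: ifP.
Qed.

Lemma e3_seg a b e : e3 a b e = seg a b b e.
Proof. by rewrite seg_sum sum_point. Qed.

Lemma mul_seg a b c e a' b' c' e' :
  i3mul (seg a b c e) (seg a' b' c' e') =
  i3scale (ind [&& a <= a', b <= a' <= c, b' <= e <= c' & e <= e']) (seg a a' e e').
Proof.
apply: ev_ext => x1 x2 x3 h; rewrite ev_mul // ev_scale !ev_seg h indM.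
rewrite big_mkcond (big_only1 a') //= => [|y1 ne _]; last first.
  case: ifP => // _; rewrite big1 // => y2 _.
  by rewrite !ev_seg (negbTE ne) /= andbF ind0 mulr0.
rewrite big_mkcond (big_only1 e) //= => [|y2 ne _]; last first.
  by case: ifP => // _; rewrite !ev_seg (negbTE ne) /= !andbF ind0 mul0r.
rewrite !ev_seg !eqxx !indM !ind_if; congr ind; rewrite /chain3 /=.
case: (eqVneq x1 a) => [<-|_]; last by rewrite !andbF.
case: (eqVneq x3 e') => [<-|_]; last by rewrite !andbF.
have [a'x2|] := boolP (a' <= x2); last by rewrite !andbF.
have [x2e|] := boolP (x2 <= e); last by rewrite !andbF.
rewrite (le_trans a'x2 x2e) !andbT /=.
by case: (x1 <= a'); case: (e <= x3); rewrite /= ?andbF -?andbA ?andbT.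
Qed.

Section Span.
Variable S : I3 -> Prop.

Lemma span3_ind (Q : I3 -> Prop) :
  Q 0 -> (forall f g, Q f -> Q g -> Q (f + g)) ->
  (forall c f, Q f -> Q (i3scale c f)) -> (forall f, S f -> Q f) ->
  forall f, span3 S f -> Q f.
Proof.
move=> Q0 QD QZ QS f [n [c [s [Ss ->]]]]; rewrite big_i3addE.
by apply: (big_ind Q) => // i _; apply/QZ/QS.
Qed.

Lemma span3_gen f : S f -> span3 S f.
Proof. by exists 1%N, (fun=> 1), (fun=> f); rewrite big_i3addE big_ord1 i3scale1. Qed.

Lemma span3_zero : span3 S 0.
Proof. by exists 0%N, (fun=> 0), (fun=> 0); rewrite big_i3addE big_ord0; split=> [[]|]. Qed.

Lemma span3_add f g : span3 S f -> span3 S g -> span3 S (f + g).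
Proof.
move=> [m [c [s [Ss ->]]]] [n [c' [s' [Ss' ->]]]].
pose cat T (A : 'I_m -> T) (B : 'I_n -> T) i :=
  match split i with inl j => A j | inr j => B j end.
exists (m + n)%N, (cat _ c c'), (cat _ s s'); split=> [i|].
  by rewrite /cat; case: split.
rewrite !big_i3addE big_split_ord /cat; congr (_ + _); apply: eq_bigr => i _.
  by rewrite -[lshift n i]/(unsplit (inl i)) unsplitK.
by rewrite -[rshift m i]/(unsplit (inr i)) unsplitK.
Qed.

Lemma span3_scale c f : span3 S f -> span3 S (i3scale c f).
Proof.
move=> [n [c' [s [Ss ->]]]]; exists n, (fun i => c * c' i), s; split=> //.
rewrite !big_i3addE (big_morph _ (i3scaleDr c) (i3scaler0 c)).
by apply: eq_bigr => i _; rewrite i3scaleA.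
Qed.

Lemma span3_sub f g : span3 S f -> span3 S g -> span3 S (f - g).
Proof. by move=> Sf Sg; rewrite -i3scaleN1; apply/span3_add/span3_scale. Qed.

Lemma span3_sum (I : finType) (Q : pred I) (F : I -> I3) :
  (forall i, Q i -> span3 S (F i)) -> span3 S (\sum_(i | Q i) F i).
Proof. by move=> SF; apply: big_ind => //; [exact: span3_zero | exact: span3_add]. Qed.

End Span.

Lemma commsp_comm (U V : I3 -> Prop) u v : U u -> V v -> commsp U V (i3comm u v).
Proof. by move=> Uu Vv; apply: span3_gen; exists u, v. Qed.

Definition balanced f := J31 f /\ forall x y, cov1 (x, y) -> ev f x x y = ev f x y y.

Lemma balanced_span (S : I3 -> Prop) f :
  (forall g, S g -> balanced g) -> span3 S f -> balanced f.
Proof.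
move=> Sbal; apply: span3_ind => //.
- by split=> [x|x y _]; rewrite !ev0.
- move=> f1 f2 [J1 b1] [J2 b2]; split=> [x|x y cxy]; rewrite !ev_add ?J1 ?J2 ?addr0 //.
  by rewrite b1 // b2.
- move=> c g [Jg bg]; split=> [x|x y cxy]; rewrite !ev_scale ?Jg ?mulr0 //.
  by rewrite bg.
Qed.

Lemma comm_balanced u v : J31 u -> J31 v -> balanced (i3comm u v).
Proof.
move=> Ju Jv; split=> [x|x y cxy]; rewrite !ev_comm.
  by rewrite !ev_mul_xxx Ju mul0r mulr0 subrr.
by rewrite !ev_mul_xxy // !ev_mul_xyy // !Ju !Jv !mul0r !mulr0 !add0r !addr0.
Qed.

Lemma Z32_balanced f : Z32 f -> balanced f.
Proof. by apply: balanced_span => _ [u [v [Ju [Jv ->]]]]; apply: comm_balanced. Qed.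

Lemma Z33_cov_eq0 f x y : Z33 f -> cov1 (x, y) -> ev f x x y = 0.
Proof.
move=> Zf cxy; move: f Zf; apply: span3_ind.
- exact: ev0.
- by move=> f g f0 g0; rewrite ev_add f0 g0 addr0.
- by move=> c f f0; rewrite ev_scale f0 mulr0.
move=> _ [u [v [/Z32_balanced[Ju bu] [/Z32_balanced[Jv bv] ->]]]].
by rewrite ev_comm !ev_mul_xxy // Ju Jv !mul0r !add0r -bu // -bv // mulrC subrr.
Qed.

Lemma seg_J31 a b c e : a != e -> J31 (seg a b c e).
Proof.
by move=> ae x; rewrite ev_seg; case: eqVneq => [->|_]; rewrite ?(negbTE ae) ?andbF.
Qed.

Lemma comm_e3_seg a b : a < b -> i3comm (e3 a a b) (e3 a b b) = seg a a b b.
Proof.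
move=> ab; rewrite i3commE !e3_seg !mul_seg !lexx (ltW ab) (lt_geF ab) /=.
by rewrite ind1 ind0 i3scale1 i3scale0 subr0.
Qed.

Lemma seg_Z32 a b : a < b -> Z32 (seg a a b b).
Proof.
move=> ab; rewrite -comm_e3_seg //.
by apply: commsp_comm; rewrite e3_seg; apply: seg_J31; rewrite lt_eqF.
Qed.

Lemma comm_seg_e3 a b c :
  a < b -> b < c -> i3comm (seg a a b b) (seg b b c c) = e3 a b c.
Proof.
move=> ab bc; rewrite i3commE !mul_seg !lexx (ltW ab) (ltW bc) (lt_geF ab) /=.
by rewrite ind1 ind0 i3scale1 i3scale0 subr0 e3_seg.
Qed.

Lemma comm_seg_lower a m c :
  a < m -> m < c -> i3comm (seg a a m m) (seg a a c c) = seg a a m c.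
Proof.
move=> am mc; rewrite i3commE !mul_seg !lexx (ltW am) (ltW mc) (ltW (lt_trans am mc)).
by rewrite (lt_geF mc) /= ?andbF ind1 ind0 i3scale1 i3scale0 subr0.
Qed.

Lemma comm_seg_upper a m c :
  a < m -> m < c -> i3comm (seg a a c c) (seg m m c c) = seg a m c c.
Proof.
move=> am mc; rewrite i3commE !mul_seg !lexx (ltW am) (ltW mc) (lt_geF am) /=.
by rewrite ind1 ind0 i3scale1 i3scale0 subr0.
Qed.

Lemma e3_Z33 a m b c : a < m -> m < c -> a <= b <= c -> Z33 (e3 a b c).
Proof.
move=> am mc /andP[ab bc]; have ac := lt_trans am mc.
have chainZ33 x : a < x -> x < c -> Z33 (e3 a x c).
  by move=> ax xc; rewrite -comm_seg_e3 //; apply: commsp_comm; apply: seg_Z32.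
have [->|nba] := eqVneq b a.
  have -> : e3 a a c = seg a a m c - \sum_(x | a < x <= m) e3 a x c.
    apply/esym/eqP; rewrite subr_eq seg_sum (bigD1 a) ?lexx ?ltW //=.
    by apply/eqP; congr (_ + _); apply: eq_bigl => x; rewrite lt_def andbC andbA.
  apply: span3_sub; first by rewrite -comm_seg_lower //; apply: commsp_comm; apply: seg_Z32.
  by apply: span3_sum => x /andP[ax xm]; apply: chainZ33 ax (le_lt_trans xm mc).
have [->|nbc] := eqVneq b c.
  have -> : e3 a c c = seg a m c c - \sum_(x | m <= x < c) e3 a x c.
    apply/esym/eqP; rewrite subr_eq seg_sum (bigD1 c) ?lexx ?ltW //=.
    apply/eqP; congr (_ + _); apply: eq_bigl => x.
    by rewrite -andbA lt_def (eq_sym c) (andbC (x <= c)).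
  apply: span3_sub; first by rewrite -comm_seg_upper //; apply: commsp_comm; apply: seg_Z32.
  by apply: span3_sum => x /andP[mx xc]; apply: chainZ33 (lt_le_trans am mx) xc.
by apply: chainZ33; rewrite lt_def ?nba ?ab // eq_sym nbc bc.
Qed.

Lemma Cov_lt (k : Cov) : (val k).1 < (val k).2.
Proof. exact: cov1_lt (valP k). Qed.

Lemma gen_seg (k : Cov) : gen k = seg (val k).1 (val k).1 (val k).2 (val k).2.
Proof. by case: k => -[x y] cxy; rewrite /gen /= seg_sum sum_cover // i3addE. Qed.

Lemma gen_Z32 (k : Cov) : Z32 (gen k).
Proof. by rewrite gen_seg; apply/seg_Z32/Cov_lt. Qed.

Lemma gen_idem (k : Cov) : i3mul (gen k) (gen k) = gen k.
Proof. by rewrite gen_seg mul_seg !lexx ltW ?Cov_lt // ind1 i3scale1. Qed.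

Lemma ev_gen (k k' : Cov) : ev (gen k') (val k).1 (val k).1 (val k).2 = ind (k' == k).
Proof.
rewrite gen_seg ev_seg chain3E lexx ltW ?Cov_lt // -val_eqE /=.
case: k k' => -[x y] cxy [[a b] cab] /=; rewrite xpair_eqE eq_sym.
by case: eqVneq => [<-|]; rewrite //= lexx ltW ?(cov1_lt cab) // eq_sym.
Qed.

Definition cov_proj f : {ffun Cov -> I3} :=
  [ffun k => i3scale (ev f (val k).1 (val k).1 (val k).2) (gen k)].

Lemma cov_proj_in_gen f k : inRgen k (cov_proj f k).
Proof. by exists (ev f (val k).1 (val k).1 (val k).2); rewrite ffunE. Qed.

Lemma cov_proj_linear c f g :
  cov_proj (i3add (i3scale c f) g) =
  [ffun k => i3add (i3scale c (cov_proj f k)) (cov_proj g k)].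
Proof.
apply/ffunP => k; rewrite !ffunE !i3addE ev_add ev_scale.
by apply/ffunP => t; rewrite !ffunE mulrDl mulrA.
Qed.

Lemma cov_proj_mul f g : balanced f -> balanced g ->
  cov_proj (i3mul f g) = [ffun k => i3mul (cov_proj f k) (cov_proj g k)].
Proof.
move=> [Jf bf] [Jg bg]; apply/ffunP => -[[x y] cxy].
rewrite !ffunE i3mul_scale gen_idem /=.
by rewrite ev_mul_xxy // Jf mul0r add0r -bg.
Qed.

Lemma cov_proj_onto (h : {ffun Cov -> I3}) :
  (forall k, inRgen k (h k)) -> exists2 f, Z32 f & cov_proj f = h.
Proof.
move=> hgen; exists (\sum_k h k).
  by apply: span3_sum => k _; have [c ->] := hgen k; apply/span3_scale/gen_Z32.
apply/ffunP => k; rewrite ffunE ev_sum (big_only1 k) // => [|k' k'k _].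
  by have [c ->] := hgen k; rewrite ev_scale ev_gen eqxx ind1 mulr1.
by have [c ->] := hgen k'; rewrite ev_scale ev_gen (negbTE k'k) ind0 mulr0.
Qed.

Lemma e3_expand f :
  f = \sum_(t : T3 P) i3scale (f t) (e3 (val t).1.1 (val t).1.2 (val t).2).
Proof.
apply/ffunP => s; rewrite sum_ffunE (big_only1 s) // => [|t ts _]; rewrite !ffunE.
  by rewrite -!surjective_pairing eqxx mulr1.
by rewrite -!surjective_pairing val_eqE eq_sym (negbTE ts) mulr0.
Qed.

Lemma cov_eq0_Z33 f :
  balanced f -> (forall x y, cov1 (x, y) -> ev f x x y = 0) -> Z33 f.
Proof.
move=> [Jf bf] f0; rewrite (e3_expand f); apply: span3_sum => -[[[a b] c] h] _ /=.
rewrite -(ev_chain f h); move: h; rewrite chain3E => abc.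
have [/existsP[m /andP[am mc]] | /existsPn nomid] := boolP [exists m, a < m < c].
  exact/span3_scale/(e3_Z33 am mc).
suff -> : ev f a b c = 0 by rewrite i3scale0; apply: span3_zero.
have [eac | nac] := eqVneq a c.
  by subst c; have /eqP-> : b == a by rewrite eq_le andbC.
have cac : cov1 (a, c).
  move/andP: (abc) => [ab bc]; apply: cov1_intro => [|m /andP[am mc]].
    by rewrite lt_neqAle nac (le_trans ab bc).
  apply/negPn/negP; rewrite negb_or => /andP[ma cm].
  by move: (nomid m); rewrite !lt_def ma (eq_sym c) cm am mc.
by case/orP: (cov1_mid cac abc) => /eqP->; rewrite -?bf ?f0.
Qed.

Lemma cov_proj_ker f : Z32 f -> cov_proj f = [ffun k => i3zero P R] <-> Z33 f.
Proof.
move=> /Z32_balanced bal; split=> [f0 | Z3f].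
  apply: cov_eq0_Z33 => // x y cxy; pose k : Cov := exist _ (x, y) cxy.
  have := congr1 (fun F : {ffun Cov -> I3} => ev (F k) x x y) f0.
  by rewrite !ffunE i3zeroE ev0 ev_scale (ev_gen k) eqxx ind1 mulr1.
by apply/ffunP => -[[x y] cxy]; rewrite !ffunE /= Z33_cov_eq0 // i3scale0 i3zeroE.
Qed.

End IncidenceCube.

Theorem proposition2p7 (d : Order.disp_t) (P : finPOrderType d) (R : comPzRingType) :
  exists phi : I3 P R -> {ffun Cov P -> I3 P R}, quot_iso phi.
Proof.
exists (@cov_proj d P R); split.
- by move=> f _ k; apply: cov_proj_in_gen.
- by move=> c f g _ _; apply: cov_proj_linear.
- by move=> f g /Z32_balanced bf /Z32_balanced bg; apply: cov_proj_mul.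
- exact: cov_proj_onto.
- exact: cov_proj_ker.
Qed.
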